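(* There is a constant $C_1>0$ such that for all integers $r\geq1$ and $k_1,\ldots,k_r\geq2$, writing $K=k_1+\cdots+k_r$, \[ \frac{1}{2^{K}}<\sum_{n_1\geq\cdots\geq n_r\geq2}\frac{1}{n_1^{k_1}\cdots n_r^{k_r}}\leq\frac{C_1}{2^{K}},\qquad \frac{1}{2^{K+1}}<\sum_{n_1\geq\cdots\geq n_{r+1}\geq2}\frac{1}{n_1^{k_1}\cdots n_r^{k_r}\,n_{r+1}}\leq\frac{C_1}{2^{K}}. \]
   Context: The constant $C_1$ is independent of $r$ and $k_1,\ldots,k_r$. *)

From HB Require Import structures.
From mathcomp Require Import all_boot all_order all_algebra.
From mathcomp Require Import all_classical all_reals all_analysis.
Unset Printing Implicit Defensive.
Import Order.TTheory GRing.Theory Num.Theory.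
Local Open Scope classical_set_scope.
Local Open Scope ring_scope.

Definition chain_idx (r : nat) : set ('I_r -> nat) :=
  [set n | (forall i j : 'I_r, (i <= j)%N -> (n j <= n i)%N) /\
           (forall i : 'I_r, (2 <= n i)%N)].

Definition chain_sum (R : realType) (r : nat) (e : 'I_r -> nat) : \bar R :=
  (\esum_(n in chain_idx r) ((\prod_(i < r) ((n i)%:R ^+ e i))^-1)%:E)%R.

(* exponent vector (k_1,...,k_r,1) of length r+1 *)
Definition ext1 (r : nat) (k : 'I_r -> nat) : 'I_r.+1 -> nat :=
  fun i => match unlift ord_max i with Some j => k j | None => 1%N end.

(* For n >= 2 and every exponent e, 1/n^e <= 2^-e (2/n)^(min e 2), so both upper
   bounds reduce to sums over chains n_1 >= ... >= n_r >= 2 of products of the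
   weights (2/n_i)^2, with a last weight 2/n_{r+1} in the second sum.  Peeling off
   the largest entry n_1 = a, the part of such a sum with n_1 <= m is at most
   B(m) = 6m(m-1)/((m+1)(m+2)) <= 6 whatever r is, because B solves
   B(m) = sum_{2<=a<=m} (2/a)^2 B(a).  A last weight 2/n produces a harmonic sum
   H(a) = sum_{2<=b<=a} 1/b, and sum_a (2/a)^2 2H(a) <= 8 since
   sum_{a<=m} H(a)/a^2 + (H(m)+1)/m is nonincreasing in m.  For the lower bounds,
   the chains (2,...,2) and (3,2,...,2) alone already exceed 2^-K. *)

From HB Require Import structures.
From mathcomp Require Import all_boot all_order all_algebra.
From mathcomp Require Import all_classical all_reals all_analysis.
From mathcomp Require Import ring lra.
Import Order.TTheory GRing.Theory Num.Theory.
Local Open Scope ring_scope.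
Local Open Scope classical_set_scope.

Lemma esumZl (R : realType) (T : choiceType) (S : set T) (a : T -> \bar R) (c : R) :
  0 <= c -> (forall i, (0 <= a i)%E) ->
  \esum_(i in S) (c%:E * a i)%E = (c%:E * \esum_(i in S) a i)%E.
Proof.
move=> c0 a0; rewrite /esum -ereal_supZl //; last first.
  by apply/set0P; exists (\sum_(i \in set0) a i)%E, set0 => //; apply: fsets_set0.
by rewrite image_comp; congr ereal_sup; apply: eq_imagel => A _ /=; rewrite ge0_mule_fsumr.
Qed.

Definition ccons (r a : nat) (t : 'I_r -> nat) : 'I_r.+1 -> nat :=
  fun i => if unlift ord0 i is Some j then t j else a.
Arguments ccons {r}.

Lemma ccons0 r a (t : 'I_r -> nat) : ccons a t ord0 = a.
Proof. by rewrite /ccons unlift_none. Qed.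

Lemma cconsS r a (t : 'I_r -> nat) j : ccons a t (lift ord0 j) = t j.
Proof. by rewrite /ccons liftK. Qed.

Lemma ccons_inj r : injective (fun p : nat * ('I_r -> nat) => ccons p.1 p.2).
Proof.
move=> [a t] [b u] /= E; congr pair; first by have := congr1 (@^~ ord0) E; rewrite !ccons0.
by apply: funext => j; have := congr1 (@^~ (lift ord0 j)) E; rewrite !cconsS.
Qed.

Definition chain_upto (r m : nat) : set ('I_r -> nat) :=
  [set n | chain_idx r n /\ forall i, (n i <= m)%N].

Lemma chain_upto0 m : chain_upto 0 m = [set fun _ => 0%N].
Proof.
apply/seteqP; split => [n _|_ ->]; first by apply: funext => -[].
by split; [split => -[] | case].
Qed.

Lemma chain_upto_cons r m :
  chain_upto r.+1 m =
  (fun p => ccons p.1 p.2) @` (`I_m.+1 `*`` fun a => [set t | (2 <= a)%N /\ chain_upto r a t]).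
Proof.
apply/seteqP; split => [n [[mono ge2] lem]|_ [[a t] [/= am [a2 [[mono ge2] lea]]] <-]].
  exists (n ord0, n \o lift ord0); last first.
    by apply: funext => i; rewrite /ccons; case: unliftP => [j ->|->].
  split => /=; first exact: lem.
  split; first exact: ge2.
  split; last by move=> j; apply: mono.
  split => [i j ij|j]; last exact: ge2.
  by apply: mono; rewrite /= /bump /= !add1n ltnS.
split; last first.
  move=> i; case: (unliftP ord0 i) => [j ->|->]; rewrite ?cconsS ?ccons0.
    by apply: leq_trans (lea j) _; rewrite -ltnS.
  by rewrite -ltnS.
split => [i j|i]; last by case: (unliftP ord0 i) => [j ->|->]; rewrite ?cconsS ?ccons0.
by case: (unliftP ord0 i) => [i' ->|->]; case: (unliftP ord0 j) => [j' ->|->];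
  rewrite ?cconsS ?ccons0 //= /bump /=; apply: mono.
Qed.

Lemma ext1_const r c i : ext1 r (fun=> c) i = if i == ord_max then 1%N else c.
Proof.
rewrite /ext1; case: unliftP => [j ->|->]; last by rewrite eqxx.
by rewrite eq_sym (negbTE (neq_lift _ _)).
Qed.

Lemma ext1_const0 r c : ext1 r.+1 (fun=> c) ord0 = c.
Proof. by rewrite ext1_const -val_eqE. Qed.

Lemma ext1_const_lift r c : ext1 r.+1 (fun=> c) \o lift ord0 = ext1 r (fun=> c).
Proof. by apply: funext => j /=; rewrite !ext1_const -!val_eqE /= /bump /= add1n eqSS. Qed.

Lemma minn_ext1 r k : (forall i, (2 <= k i)%N) ->
  (fun i => minn (ext1 r k i) 2) = ext1 r (fun=> 2%N).
Proof.
move=> k2; apply: funext => i; rewrite ext1_const /ext1.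
case: unliftP => [j ->|->]; last by rewrite eqxx.
by rewrite eq_sym (negbTE (neq_lift _ _)); apply/minn_idPr.
Qed.

Lemma sum_ext1 r (k : 'I_r -> nat) : (\sum_(i < r.+1) ext1 r k i = (\sum_(i < r) k i).+1)%N.
Proof.
rewrite big_ord_recr /= /ext1 unlift_none addn1; congr _.+1.
apply: eq_bigr => i _; rewrite (_ : widen_ord _ i = lift ord_max i) ?liftK //.
by apply: val_inj; rewrite /= /bump leqNgt ltn_ord.
Qed.

Section ChainSums.
Variable R : realType.

Definition chain_bound (m : nat) : R :=
  6 * (m%:R * (m%:R - 1)) / ((m%:R + 1) * (m%:R + 2)).

Lemma chain_bound_le6 m : chain_bound m <= 6.
Proof.
have m0 : (0 : R) <= m%:R by [].
by rewrite /chain_bound ler_pdivrMr; nra.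
Qed.

Lemma chain_bound_ge1 m : (2 <= m)%N -> 1 <= chain_bound m.
Proof.
move=> m2; have m2' : (2 : R) <= m%:R by rewrite (ler_nat R 2 m).
by rewrite /chain_bound ler_pdivlMr; nra.
Qed.

Lemma sum_chain_bound m :
  \sum_(2 <= a < m.+1) (2 / a%:R) ^+ 2 * chain_bound a = chain_bound m.
Proof.
elim: m => [|[|m] IH]; first by rewrite big_geq // /chain_bound !(mul0r, mulr0).
  by rewrite big_geq // /chain_bound mulr1n subrr !(mulr0, mul0r).
rewrite big_nat_recr //= IH /chain_bound -[m.+2%:R]natr1 -[m.+1%:R]natr1.
have m0 : (0 : R) <= m%:R by [].
by field; rewrite !lt0r_neq0 //; lra.
Qed.

Definition harm_sum (m : nat) : R := \sum_(2 <= b < m.+1) (b%:R)^-1.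

Lemma harm_sum_ge0 m : 0 <= harm_sum m.
Proof. by rewrite /harm_sum sumr_ge0. Qed.

Lemma harm_sumS m : harm_sum m.+2 = harm_sum m.+1 + (m.+2%:R)^-1.
Proof. by rewrite /harm_sum big_nat_recr. Qed.

Lemma harmonic_potential_step (h x : R) : 0 <= h -> 1 <= x ->
  (h + (x + 1)^-1) / (x + 1) ^+ 2 + (h + (x + 1)^-1 + 1) / (x + 1) <= (h + 1) / x.
Proof.
move=> h0 x1; rewrite -subr_ge0.
have -> : (h + 1) / x - ((h + (x + 1)^-1) / (x + 1) ^+ 2 + (h + (x + 1)^-1 + 1) / (x + 1))
   = ((h + 1) * (x + 1) - x) / (x * (x + 1) ^+ 3).
  by field; apply/andP; split; apply: lt0r_neq0; lra.
by rewrite divr_ge0 ?mulr_ge0 ?exprn_ge0 //; nra.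
Qed.

Lemma harmonic_potential m : (1 <= m)%N ->
  \sum_(2 <= a < m.+1) harm_sum a / a%:R ^+ 2 + (harm_sum m + 1) / m%:R <= 1.
Proof.
elim: m => [//|[|m] IH] _; first by rewrite big_geq // /harm_sum big_geq // add0r divr1.
rewrite big_nat_recr //= -addrA; apply: le_trans (IH isT); rewrite lerD2l.
rewrite harm_sumS -[m.+2%:R]natr1.
by apply: harmonic_potential_step; rewrite ?harm_sum_ge0 ?ler1n.
Qed.

Lemma sum_sq_harm_sum_le m : \sum_(2 <= a < m.+1) (2 / a%:R) ^+ 2 * (2 * harm_sum a) <= 8.
Proof.
case: m => [|m]; first by rewrite big_geq.
have potential := harmonic_potential m.+1 isT.
rewrite (eq_bigr (fun a => 8 * (harm_sum a / a%:R ^+ 2))) => [|a _]; last first.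
  by rewrite expr_div_n; ring.
rewrite -mulr_sumr -[leRHS]mulr1 ler_pM2l //; apply: le_trans potential.
by rewrite lerDl divr_ge0 ?addr_ge0 ?harm_sum_ge0.
Qed.

Definition chain_weight {r} (c n : 'I_r -> nat) : R :=
  \prod_(i < r) (2 / (n i)%:R) ^+ c i.

Lemma chain_weight_ge0 r (c n : 'I_r -> nat) : 0 <= chain_weight c n.
Proof. by apply: prodr_ge0 => i _; rewrite exprn_ge0 // divr_ge0. Qed.

Lemma chain_weight_cons r (c : 'I_r.+1 -> nat) a t :
  chain_weight c (ccons a t) = (2 / a%:R) ^+ c ord0 * chain_weight (c \o lift ord0) t.
Proof.
by rewrite /chain_weight big_ord_recl ccons0; congr (_ * _); apply: eq_bigr => i _; rewrite cconsS.
Qed.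

Lemma inv_expn_le (n e : nat) : (2 <= n)%N ->
  (n%:R ^+ e)^-1 <= (2 ^+ e)^-1 * (2 / n%:R) ^+ minn e 2 :> R.
Proof.
move=> n2; have n2' : (2 : R) <= n%:R by rewrite (ler_nat R 2 n).
have -> : (n%:R ^+ e)^-1 = (2 ^+ e)^-1 * (2 / n%:R) ^+ e :> R.
  by rewrite expr_div_n mulrA mulVf ?mul1r // expf_neq0.
rewrite ler_wpM2l ?invr_ge0 ?exprn_ge0 // ler_wiXn2l ?geq_minl ?divr_ge0 //.
by rewrite ler_pdivrMr ?mul1r //; lra.
Qed.

Lemma inv_prod_expn_le r (e n : 'I_r -> nat) : (forall i, (2 <= n i)%N) ->
  (\prod_(i < r) (n i)%:R ^+ e i)^-1 <=
    (2 ^+ (\sum_(i < r) e i))^-1 * chain_weight (fun i => minn (e i) 2) n.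
Proof.
move=> n2; rewrite -prodrXr -!prodfV /chain_weight -big_split /=.
by apply: ler_prod => i _; rewrite invr_ge0 exprn_ge0 //= inv_expn_le.
Qed.

Local Open Scope ereal_scope.

Lemma esum_chain_upto_cons r m (G : ('I_r.+1 -> nat) -> \bar R) :
  (forall n, 0 <= G n) ->
  \esum_(n in chain_upto r.+1 m) G n =
  (\sum_(2 <= a < m.+1) \esum_(t in chain_upto r a) G (ccons a t))%R.
Proof.
move=> G0; rewrite chain_upto_cons esum_image; last by move=> p q _ _; apply: ccons_inj.
rewrite -(@esum_esum _ _ _ _ _ (fun a t => G (ccons a t))) // esum_fset //; last first.
  by move=> a _; apply: esum_ge0.
rewrite -fsbig_ord big_geq_mkord [RHS]big_mkcond /=; apply: eq_bigr => a _.
case: leqP => _.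
  by rewrite (_ : [set t | _] = set0) ?esum_set0 //; apply/seteqP; split => t // [].
by congr (esum _ _); apply/seteqP; split => t //= [].
Qed.

Lemma esum_chain_idx_le r (f : ('I_r -> nat) -> \bar R) x :
  (forall m, (2 <= m)%N -> \esum_(n in chain_upto r m) f n <= x) ->
  \esum_(n in chain_idx r) f n <= x.
Proof.
move=> H; apply: ge_ereal_sup => _ [S [finS SI] <-].
pose M := maxn 2 (\max_(n <- finmap.enum_fset (fset_set S)) \max_(i < r) n i).
apply: le_trans (H M (leq_maxl _ _)).
apply: ereal_sup_ubound; exists S => //; split => // n Sn; split; first exact: SI.
move=> i; apply: leq_trans (leq_maxr _ _).
apply: leq_trans (leq_bigmax_seq (F := fun n => \max_(i < r) n i) n _ _) => //.
  exact: (leq_bigmax (F := fun i => n i)).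
by rewrite in_fset_set // inE.
Qed.

Definition partial_chain_sum {r} (c : 'I_r -> nat) m : \bar R :=
  \esum_(n in chain_upto r m) (chain_weight c n)%:E.

Lemma partial_chain_sum0 (c : 'I_0 -> nat) m : partial_chain_sum c m = 1.
Proof. by rewrite /partial_chain_sum chain_upto0 esum_set1 /chain_weight ?big_ord0. Qed.

Lemma partial_chain_sumS r (c : 'I_r.+1 -> nat) m :
  partial_chain_sum c m =
  \sum_(2 <= a < m.+1) ((2 / a%:R) ^+ c ord0)%:E * partial_chain_sum (c \o lift ord0) a.
Proof.
rewrite /partial_chain_sum esum_chain_upto_cons => [|n]; last by rewrite lee_fin chain_weight_ge0.
apply: eq_bigr => a _; rewrite -esumZl ?exprn_ge0 ?divr_ge0 // => [|t]; last first.
  by rewrite lee_fin chain_weight_ge0.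
by apply: eq_esum => t _; rewrite chain_weight_cons EFinM.
Qed.

Lemma partial_chain_sumS_le (B : nat -> R) {r} (c : 'I_r.+1 -> nat) {m} :
  (forall a, (2 <= a)%N -> partial_chain_sum (c \o lift ord0) a <= (B a)%:E) ->
  partial_chain_sum c m <= (\sum_(2 <= a < m.+1) (2 / a%:R) ^+ c ord0 * B a)%:E.
Proof.
move=> leB; rewrite partial_chain_sumS -sumEFin big_nat [leRHS]big_nat.
by apply: lee_sum => a /andP[a2 _]; rewrite EFinM lee_wpmul2l ?leB.
Qed.

Lemma partial_chain_sum_sq r m : (2 <= m)%N ->
  partial_chain_sum (fun _ : 'I_r => 2%N) m <= (chain_bound m)%:E.
Proof.
elim: r m => [|r IH] m m2; first by rewrite partial_chain_sum0 lee_fin chain_bound_ge1.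
apply: le_trans (partial_chain_sumS_le chain_bound _ _) _ => [a a2|]; first exact: IH.
by rewrite sum_chain_bound.
Qed.

Lemma partial_chain_sum_harm m :
  partial_chain_sum (ext1 0 (fun=> 2%N)) m <= (2 * harm_sum m)%:E.
Proof.
apply: le_trans (partial_chain_sumS_le (fun=> 1%R) _ _) _ => [a _|].
  by rewrite partial_chain_sum0.
rewrite ext1_const /= lee_fin /harm_sum mulr_sumr.
by apply: ler_sum => b _; rewrite expr1 mulr1.
Qed.

Lemma partial_chain_sum_ext1 r m : (2 <= m)%N ->
  partial_chain_sum (ext1 r.+1 (fun=> 2%N)) m <= (8 * chain_bound m)%:E.
Proof.
elim: r m => [|r IH] m m2.
  apply: le_trans (partial_chain_sumS_le (fun a => 2 * harm_sum a)%R _ _) _ => [a _|].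
    by rewrite ext1_const_lift partial_chain_sum_harm.
  rewrite ext1_const0 lee_fin; apply: le_trans (sum_sq_harm_sum_le m) _.
  by rewrite ler_peMr ?chain_bound_ge1.
apply: le_trans (partial_chain_sumS_le (fun a => 8 * chain_bound a)%R _ _) _ => [a a2|].
  by rewrite ext1_const_lift IH.
rewrite ext1_const0 lee_fin -(sum_chain_bound m) mulr_sumr.
by apply: ler_sum => a _; rewrite mulrCA.
Qed.

Lemma chain_sum_le_weighted r (e : 'I_r -> nat) :
  chain_sum R r e <= ((2 ^+ (\sum_(i < r) e i))^-1)%:E *
    \esum_(n in chain_idx r) (chain_weight (fun i => minn (e i) 2) n)%:E.
Proof.
rewrite -esumZl ?invr_ge0 ?exprn_ge0 // => [|n]; last by rewrite lee_fin chain_weight_ge0.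
by apply: le_esum => n [_ n2]; rewrite -EFinM lee_fin inv_prod_expn_le.
Qed.

Lemma chain_sum_le r (k : 'I_r -> nat) : (forall i, (2 <= k i)%N) ->
  chain_sum R r k <= (6 / 2 ^+ (\sum_(i < r) k i))%:E.
Proof.
move=> k2; apply: le_trans (chain_sum_le_weighted _ k) _.
have -> : (fun i => minn (k i) 2) = fun=> 2%N by apply: funext => i; apply/minn_idPr.
rewrite mulrC EFinM lee_wpmul2l ?lee_fin ?invr_ge0 ?exprn_ge0 //.
apply: esum_chain_idx_le => m m2; apply: le_trans (partial_chain_sum_sq _ _ m2) _.
by rewrite lee_fin chain_bound_le6.
Qed.

Lemma chain_sum_ext1_le r (k : 'I_r.+1 -> nat) : (forall i, (2 <= k i)%N) ->
  chain_sum R r.+2 (ext1 r.+1 k) <= (24 / 2 ^+ (\sum_(i < r.+1) k i))%:E.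
Proof.
move=> k2; apply: le_trans (chain_sum_le_weighted _ _) _.
rewrite minn_ext1 // sum_ext1.
rewrite (_ : 24 / _ = (2 ^+ (\sum_(i < r.+1) k i).+1)^-1 * 48)%R; last first.
  by rewrite exprS invfM; field; rewrite expf_neq0.
rewrite EFinM lee_wpmul2l ?lee_fin ?invr_ge0 ?exprn_ge0 //.
apply: esum_chain_idx_le => m m2; apply: le_trans (partial_chain_sum_ext1 _ _ m2) _.
by rewrite lee_fin -[48%R]/((8 * 6)%N%:R) natrM ler_wpM2l ?chain_bound_le6.
Qed.

Lemma chain_sum_gt r (e : 'I_r.+1 -> nat) :
  ((2 ^+ (\sum_(i < r.+1) e i))^-1)%:E < chain_sum R r.+1 e.
Proof.
pose twos := fun _ : 'I_r.+1 => 2%N.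
pose three_twos := fun i : 'I_r.+1 => if i == 0%N :> nat then 3%N else 2%N.
pose term n : R := ((\prod_(i < r.+1) (n i)%:R ^+ e i)^-1)%R.
have term_gt0 : (0 < term three_twos)%R.
  by rewrite invr_gt0 prodr_gt0 // => i _; rewrite exprn_gt0 // /three_twos; case: ifP.
have twos_neq : twos <> three_twos by move=> /(congr1 (@^~ ord0)).
have two_chains : (term twos + term three_twos)%:E <= chain_sum R r.+1 e.
  apply: esum_ge; exists ([set twos] `|` [set three_twos]).
    split; first by rewrite finite_setU; split; apply: finite_set1.
    move=> _ [] -> /=; split => // [i j|i]; rewrite /three_twos; last by case: ifP.
    by case: eqP => [j0|_]; case: eqP => [|i0] //; rewrite j0 leqn0 => /eqP /i0.
  by rewrite fsbigU ?fsbig_set1 // => n [/= -> /twos_neq].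
apply: lt_le_trans two_chains; rewrite lte_fin.
have -> : term twos = ((2 ^+ (\sum_(i < r.+1) e i))^-1)%R by rewrite /term prodrXr.
by rewrite ltrDl.
Qed.

End ChainSums.

Theorem lemma4p3 (R : realType) :
  exists C1 : R, 0 < C1 /\
  forall (r : nat) (k : 'I_r -> nat),
    (1 <= r)%N -> (forall i, (2 <= k i)%N) ->
    let K := (\sum_(i < r) k i)%N in
    (((2 ^+ K)^-1)%:E < chain_sum R r k)%E /\
    (chain_sum R r k <= (C1 / 2 ^+ K)%:E)%E /\
    (((2 ^+ K.+1)^-1)%:E < chain_sum R r.+1 (ext1 r k))%E /\
    (chain_sum R r.+1 (ext1 r k) <= (C1 / 2 ^+ K)%:E)%E.
Proof.
exists 24; split => //; case=> [//|r] k _ k2 K; split; [|split; [|split]].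
- exact: chain_sum_gt.
- apply: le_trans (chain_sum_le _ _ _ k2) _.
  by rewrite lee_fin ler_wpM2r ?invr_ge0 ?exprn_ge0 // ler_nat.
- by rewrite -sum_ext1; apply: chain_sum_gt.
- exact: chain_sum_ext1_le.
Qed.
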